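(* Let $\mathcal F\subseteq 2^{[n]}$ be a simply rooted family of sets such that $\emptyset\in\mathcal F$. For $0\le k\le n$ let $\mathcal C_k(\mathcal F)=\{[A,B]: A\subseteq B,\ [A,B]\subseteq\mathcal F,\ |B\setminus A|=k\}$. Then $$\sum_{k=0}^n (-1)^k|\mathcal C_k(\mathcal F)|=1.$$
   Context: $[n]=\{1,\dots,n\}$, $2^{[n]}$ its power set, and $[A,B]=\{C\in 2^{[n]}: A\subseteq C\subseteq B\}$; $[i,A]$ means $[\{i\},A]$. A family $\mathcal F\subseteq 2^{[n]}$ is simply rooted if for every non-empty $A\in\mathcal F$ there is $i\in A$ with $[i,A]\subseteq\mathcal F$. *)

From mathcomp Require Import all_boot all_order all_algebra.
Set Implicit Arguments. Unset Strict Implicit. Unset Printing Implicit Defensive.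
Import GRing.Theory Num.Theory.

(* Ground set [n] is modelled by 'I_n; subsets of [n] by {set 'I_n}. *)

Definition interval (n : nat) (A B : {set 'I_n}) : {set {set 'I_n}} :=
  [set C : {set 'I_n} | (A \subset C) && (C \subset B)].

Definition simply_rooted (n : nat) (F : {set {set 'I_n}}) : Prop :=
  forall A, A \in F -> A != set0 ->
    exists2 i, i \in A & interval [set i] A \subset F.

(* C_k(F): intervals [A,B] (A ⊆ B) contained in F with |B \ A| = k.
   An interval [A,B] with A ⊆ B determines (A,B) (A its min, B its max),
   so intervals are represented by the pairs (A,B). *)
Definition Ck (n : nat) (F : {set {set 'I_n}}) (k : nat)
  : {set {set 'I_n} * {set 'I_n}} :=
  [set AB : {set 'I_n} * {set 'I_n} | (AB.1 \subset AB.2) && (interval AB.1 AB.2 \subset F)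
            && (#|AB.2 :\: AB.1| == k)].

From Pilot Require Import Defs.
From mathcomp Require Import all_boot all_order all_algebra.

(* Let e(B) be the signed count of the intervals [A,B] contained in F with top
   B, so that the alternating sum is the sum of e(B) over all B.  Clearly
   e(B) = 0 for B outside F and e(∅) = 1.  If B ∈ F is nonempty with root i,
   every [A,B] with i ∈ A lies in [i,B] ⊆ F, while for i ∉ A we have
   [A,B] ⊆ F iff [A,B∖i] ⊆ F; pairing A with A ∪ {i} gives
   e(B) = [B∖i = ∅] - e(B∖i), hence e(B) = [B = ∅] by induction on |B|. *)

Set Implicit Arguments.
Unset Strict Implicit.
Unset Printing Implicit Defensive.
Import GRing.Theory Num.Theory.
Local Open Scope ring_scope.

Lemma sum_subsetD1 (T : finType) (V : nmodType) (f : {set T} -> V) (S : {set T}) i :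
  i \in S ->
  \sum_(A : {set T} | A \subset S) f A =
    \sum_(A : {set T} | A \subset S :\ i) (f A + f (i |: A)).
Proof.
move=> iS; rewrite big_split /= (bigID (fun A : {set T} => i \in A)) /= addrC.
congr (_ + _).
  by apply: eq_bigl => A; rewrite subsetD1.
rewrite (reindex_onto (fun A => i |: A) (fun A => A :\ i)) /=; last first.
  by move=> A /andP[_ iA]; rewrite setD1K.
apply: eq_bigl => A; rewrite setU11 andbT subUset sub1set iS /= subsetD1.
apply/andP/andP => [[AS /eqP <-]|[AS iA]]; last by rewrite setU1K.
by rewrite setD11 (subset_trans (subD1set _ _)) // subUset sub1set iS.
Qed.

Lemma cardsD_setU1 (T : finType) (S A : {set T}) i :
  i \in S -> i \notin A -> #|S :\: A| = #|S :\: (i |: A)|.+1.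
Proof.
by move=> iS iA; rewrite (cardsD1 i) inE iA iS add1n setDDl setUC.
Qed.

Lemma sum_subset_sign (T : finType) (R : pzRingType) (S : {set T}) :
  \sum_(A : {set T} | A \subset S) (-1) ^+ #|S :\: A| = (S == set0)%:R :> R.
Proof.
have [->|[i iS]] := set_0Vmem S.
  by rewrite (big_pred1 set0) ?setD0 ?cards0 ?eqxx // => A; rewrite subset0.
rewrite (sum_subsetD1 _ iS) big1; last first.
  move=> A /subsetD1P[_ iA].
  by rewrite (cardsD_setU1 iS iA) exprS mulN1r addNr.
by case: eqVneq iS => // ->; rewrite inE.
Qed.

Lemma sum_card_fibers (T : finType) (R : pzSemiRingType) (P : pred T) (w : T -> nat)
    (c : nat -> R) N :
  (forall x, w x < N)%N ->
  \sum_(0 <= k < N) c k * #|[set x | P x && (w x == k)]|%:R = \sum_(x | P x) c (w x).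
Proof.
move=> wN; rewrite big_mkord (partition_big (fun x => Ordinal (wN x)) predT) //=.
apply: eq_bigr => k _; rewrite -sumr_const mulr_sumr.
apply: eq_big => x; first by rewrite inE; congr (_ && _); apply/eqP/eqP=> [<-|/val_inj].
by rewrite inE => /andP[_ /eqP ->]; rewrite mulr1.
Qed.

(* The qualified name is needed: [interval] alone denotes MathComp's type of
   intervals. *)
Lemma in_interval n (A B C : {set 'I_n}) :
  (C \in Defs.interval A B) = (A \subset C) && (C \subset B).
Proof. by rewrite inE. Qed.

Lemma interval_subset n (A A' B B' : {set 'I_n}) :
  A' \subset A -> B \subset B' -> Defs.interval A B \subset Defs.interval A' B'.
Proof.
move=> A'A BB'; apply/subsetP=> C; rewrite !in_interval => /andP[AC CB].
by rewrite (subset_trans A'A AC) (subset_trans CB BB').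
Qed.

Section RootedFamily.
Variables (n : nat) (F : {set {set 'I_n}}).
Implicit Types A B : {set 'I_n}.

Lemma interval_sub_rootE A B i : i \notin A -> Defs.interval [set i] B \subset F ->
  (Defs.interval A B \subset F) = (Defs.interval A (B :\ i) \subset F).
Proof.
move=> iA rootB; apply/idP/idP.
  by apply: subset_trans; apply: interval_subset (subD1set B i).
move=> /subsetP AB'F; apply/subsetP=> C; rewrite in_interval => /andP[AC CB].
have [iC|iC] := boolP (i \in C).
  by apply: (subsetP rootB); rewrite in_interval sub1set iC CB.
by apply: AB'F; rewrite in_interval AC subsetD1 CB.
Qed.

Definition euler_at B : int :=
  \sum_(A : {set 'I_n} | A \subset B)
    (if Defs.interval A B \subset F then (-1) ^+ #|B :\: A| else 0).

Lemma euler_at_notin B : B \notin F -> euler_at B = 0.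
Proof.
move=> BF; apply: big1 => A AB; case: ifP => // /subsetP ABF.
by case/negP: BF; apply: ABF; rewrite in_interval AB subxx.
Qed.

Lemma euler_at0 : set0 \in F -> euler_at set0 = 1.
Proof.
move=> F0; rewrite /euler_at (big_pred1 set0); last by move=> A; rewrite subset0.
rewrite setD0 cards0 expr0; case: ifP => // /negP[].
by apply/subsetP=> C; rewrite in_interval subset0 => /andP[_ /eqP ->].
Qed.

Lemma euler_at_root B i : i \in B -> Defs.interval [set i] B \subset F ->
  euler_at B = (B :\ i == set0)%:R - euler_at (B :\ i).
Proof.
move=> iB rootB; rewrite /euler_at (sum_subsetD1 _ iB) -sum_subset_sign -sumrB.
apply: eq_bigr => A /subsetD1P[_ iA].
have -> : Defs.interval (i |: A) B \subset F.
  by apply: subset_trans rootB; apply: interval_subset; rewrite ?sub1set ?setU11.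
rewrite -(interval_sub_rootE iA rootB) (cardsD_setU1 iB iA) setDDl.
case: ifP => _; last by rewrite add0r subr0.
by rewrite exprS mulN1r addNr subrr.
Qed.

Lemma euler_atE : simply_rooted F -> set0 \in F ->
  forall B, euler_at B = (B == set0)%:R.
Proof.
move=> rooted F0 B; have [m] := ubnP #|B|; elim: m B => // m IH B /ltnSE Bm.
have [->|B0] := eqVneq B set0; first exact: euler_at0.
have [BF|BnF] := boolP (B \in F); last by rewrite euler_at_notin.
have [i iB rootB] := rooted B BF B0.
rewrite (euler_at_root iB rootB) IH ?subrr //.
by rewrite (cardsD1 i B) iB in Bm.
Qed.

Definition sub_interval (AB : {set 'I_n} * {set 'I_n}) :=
  (AB.1 \subset AB.2) && (Defs.interval AB.1 AB.2 \subset F).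

Lemma sum_intervals_euler_at :
  \sum_(AB | sub_interval AB) (-1) ^+ #|AB.2 :\: AB.1| = \sum_B euler_at B.
Proof.
rewrite big_mkcond -(pair_big xpredT xpredT (fun A B =>
  if sub_interval (A, B) then (-1) ^+ #|B :\: A| else 0)) exchange_big /=.
apply: eq_bigr => B _; rewrite /euler_at [RHS]big_mkcond; apply: eq_bigr => A _.
by rewrite /sub_interval; case: (A \subset B).
Qed.

End RootedFamily.

Theorem corollary1 (n : nat) (F : {set {set 'I_n}}) :
  simply_rooted F -> set0 \in F ->
  \sum_(0 <= k < n.+1) (-1) ^+ k * (#|Ck F k|)%:R = 1 :> int.
Proof.
move=> rooted F0.
have weight_lt (AB : {set 'I_n} * {set 'I_n}) : (#|AB.2 :\: AB.1| < n.+1)%N.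
  by rewrite ltnS -[n in (_ <= n)%N]card_ord max_card.
rewrite (sum_card_fibers (sub_interval F) (fun k => (-1) ^+ k) weight_lt).
rewrite sum_intervals_euler_at (bigD1 set0) //= euler_atE // eqxx big1 ?addr0 //.
by move=> B /negbTE B0; rewrite euler_atE // B0.
Qed.
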